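(* Let $t\ge 0$ be an integer and consider any complete run of the exponential-edge chip-firing process starting with $2^{t+2}$ chips at site $0$. For $0\le k\le t$, site $k$ fires exactly $2$ more times than site $k+1$. Similarly, for $-t\le k\le 0$, site $k$ fires exactly $2$ more times than site $k-1$.
   Context: Exponential-edge graph with parameter $t$: the vertex set is $\mathbb{Z}$; for each $0\le k\le t$ there are $2^{t-k}$ parallel edges between $k$ and $k+1$ and $2^{t-k}$ parallel edges between $-k$ and $-k-1$; all other pairs of adjacent integers ($i,i+1$ with $i\ge t+1$ or $i+1\le -t-1$) are joined by a single edge. If a site has $a$ edges to its left neighbor and $b$ edges to its right neighbor, a firing move at that site chooses $a+b$ chips present there and sends the $a$ smallest of them to the left neighbor and the $b$ largest to the right neighbor (chips carry distinct labels from a totally ordered set). A complete run is a sequence of legal firing moves ending in a configuration where no firing move is possible. *)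

From mathcomp Require Import all_boot all_order all_algebra.
Set Implicit Arguments. Unset Strict Implicit. Unset Printing Implicit Defensive.
Import Order.TTheory GRing.Theory Num.Theory.
Local Open Scope ring_scope.

(* Number of parallel edges between integer sites i and i+1 in the
   exponential-edge graph with parameter t:
   - 2^(t-k) edges between k and k+1, for 0 <= k <= t  (i = k);
   - 2^(t-k) edges between -k-1 and -k, for 0 <= k <= t (i = -k-1,
     so |i| = k+1 and 2^(t-k) = 2^(t+1-|i|));
   - a single edge otherwise. *)
Definition nedges (t : nat) (i : int) : nat :=
  if (0 <= i) && (i <= t%:Z) then (2 ^ (t - `|i|))%N
  else if (- (t.+1)%:Z <= i) && (i <= -1) then (2 ^ (t.+1 - `|i|))%N
  else 1%N.

Definition left_deg (t : nat) (v : int) : nat := nedges t (v - 1).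
Definition right_deg (t : nat) (v : int) : nat := nedges t v.

(* Chips are labelled by distinct natural numbers (a totally ordered set);
   a configuration gives the site of every chip. *)
Definition config := nat -> int.

Definition legal_move (t : nat) (L : seq nat) (c : config) (v : int)
  (S : seq nat) : bool :=
  [&& uniq S, all (fun x => (x \in L) && (c x == v)) S
    & size S == (left_deg t v + right_deg t v)%N].

(* Result of the firing move: the left_deg smallest chips of S go to v-1,
   the right_deg largest chips of S go to v+1, the others stay. *)
Definition fire (t : nat) (c : config) (v : int) (S : seq nat) : config :=
  fun x => if x \in S then
             (if (count (fun y => (y < x)%N) S < left_deg t v)%N
              then v - 1 else v + 1)
           else c x.

Inductive is_run (t : nat) (L : seq nat) :
  config -> seq (int * seq nat) -> config -> Prop :=
| run_nil c : is_run t L c [::] c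
| run_cons c v S ms c' :
    legal_move t L c v S ->
    is_run t L (fire t c v S) ms c' ->
    is_run t L c ((v, S) :: ms) c'.

Definition stable (t : nat) (L : seq nat) (c : config) : Prop :=
  ~ exists v S, legal_move t L c v S.

Definition nfirings (ms : seq (int * seq nat)) (v : int) : nat :=
  count (fun m => m.1 == v) ms.

Definition all_at_zero : config := fun _ => 0.

(* The chip counts of a configuration reached by a run are linear in its
   firing vector f: the count at w is N [w = 0] minus the weighted Laplacian
   of f at w.  By the least action principle f is bounded by every
   nonnegative vector whose firing from the start leaves no site able to
   fire; u(w) = 2 (t + 1 - |w|) + 1 (and 0 beyond t + 1) is one, so
   f(+-(t+2)) = 0 and f(+-(t+1)) <= 1.  On each half-line, as the edge
   multiplicities halve from one site to the next, stability of the sites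
   at distance 1, ..., t+1 says that the slopes d_k = f(k) - f(k+1) satisfy
   0 <= 2 d_k - d_(k+1) <= 2 and d_t - d_(t+1) <= 1.  Hence every slope is at
   most 2, and either all of d_0, ..., d_t equal 2 and f(0) = 2t + 3, or
   d_0 <= 1 and f(0) <= 2t + 2.  Stability of site 0 with its 2^(t+2) chips
   gives d_0 + d_0' >= 3 for the two half-lines, so one of them has d_0 = 2,
   hence f(0) = 2t + 3, hence so does the other. *)

From mathcomp Require Import all_boot all_order all_algebra.
From mathcomp Require Import zify ring.
Set Implicit Arguments.
Unset Strict Implicit.
Unset Printing Implicit Defensive.
Import Order.TTheory GRing.Theory Num.Theory.
Local Open Scope ring_scope.

Lemma count_rank_lt_sorted (s : seq nat) (l : nat) :
  sorted (fun x y => y < x)%N s ->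
  count (fun x => count (fun y => y < x)%N s < l)%N s = minn l (size s).
Proof.
elim: s l => [|m s IHs] l /=; first by rewrite minn0.
move=> s_path.
have /allP lt_m := order_path_min (fun _ _ _ ab bc => ltn_trans bc ab) s_path.
have -> : count (fun y => y < m)%N s = size s.
  by rewrite -count_predT; apply: eq_in_count => y /lt_m.
have -> : count (fun x => (m < x) + count (fun y => y < x)%N s < l)%N s
        = count (fun x => count (fun y => y < x)%N s < l)%N s.
  by apply: eq_in_count => x /lt_m /ltnW x_le_m; rewrite (leq_gtF x_le_m).
rewrite (ltnn m) IHs ?(path_sorted s_path) //; case: (ltnP (size s) l); lia.
Qed.

Lemma count_rank_lt (S : seq nat) (l : nat) : uniq S ->
  count (fun x => count (fun y => y < x)%N S < l)%N S = minn l (size S).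
Proof.
move=> uS; set s := rev (sort leq S).
have pSs : perm_eq S s by rewrite perm_sym perm_rev perm_sort.
have s_sorted : sorted (fun x y => y < x)%N s.
  by rewrite rev_sorted ltn_sorted_uniq_leq sort_uniq uS (sort_sorted leq_total).
under eq_count do rewrite (permP pSs).
by rewrite (permP pSs) (perm_size pSs) count_rank_lt_sorted.
Qed.

Lemma count_if_eq (T : Type) (U : eqType) (p : pred T) (a b u : U) (s : seq T) :
  count (fun x => (if p x then a else b) == u) s
  = ((a == u) * count p s + (b == u) * count (predC p) s)%N.
Proof. by elim: s => [|x s /= ->]; [rewrite !muln0 | case: (p x) => /=; lia]. Qed.

Lemma count_split_subset (T : eqType) (a : pred T) (S L : seq T) :
  uniq S -> uniq L -> {subset S <= L} ->
  count a L = (count a S + count a [seq x <- L | x \notin S])%N.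
Proof.
move=> uS uL sSL; rewrite -(permP (permEl (perm_filterC (mem S) L))) count_cat.
congr (_ + _)%N; apply/permP; apply: uniq_perm; rewrite ?filter_uniq //.
move=> x; rewrite mem_filter /=.
by case: (boolP (x \in S)) => // x_S; rewrite (sSL x x_S).
Qed.

Definition deg (t : nat) (v : int) : nat := (left_deg t v + right_deg t v)%N.

Definition laplacian (t : nat) (f : int -> int) (v : int) : int :=
  f v * (deg t v)%:Z - f (v - 1) * (right_deg t (v - 1))%:Z
  - f (v + 1) * (left_deg t (v + 1))%:Z.

Definition delta (v : int) : int -> int := fun x => (v == x)%:Z.

Lemma laplacian_delta t v w : laplacian t (delta v) w =
  (v == w)%:Z * (deg t v)%:Z - (v + 1 == w)%:Z * (right_deg t v)%:Z
  - (v - 1 == w)%:Z * (left_deg t v)%:Z.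
Proof.
rewrite /laplacian /delta.
have -> : (v == w - 1) = (v + 1 == w) by rewrite eq_sym subr_eq eq_sym.
have -> : (v == w + 1) = (v - 1 == w) by rewrite subr_eq.
congr (_ - _ - _).
- by case: eqP => [->|].
- by case: eqP => [<-|]; rewrite ?addrK.
- by case: eqP => [<-|]; rewrite ?subrK.
Qed.

Section Firing.
Variables (t : nat) (L : seq nat).
Hypothesis uL : uniq L.

Definition nchips (c : config) (v : int) : nat := count (fun x => c x == v) L.

Lemma nchips_fire c v S w : legal_move t L c v S ->
  (nchips (fire t c v S) w)%:Z = (nchips c w)%:Z - laplacian t (delta v) w.
Proof.
case/and3P=> uS /allP S_at_v /eqP size_S.
have sSL : {subset S <= L} by move=> x /S_at_v /andP[].
set rk := fun x => (count (fun y => y < x)%N S < left_deg t v)%N.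
have rk_left : count rk S = left_deg t v.
  by rewrite count_rank_lt // size_S; apply/minn_idPl/leq_addr.
have rk_right : count (predC rk) S = right_deg t v.
  by apply/eqP; rewrite -(eqn_add2l (left_deg t v)) -{1}rk_left count_predC size_S.
have fire_S : count (fun x => fire t c v S x == w) S
    = (((v - 1)%R == w) * left_deg t v + ((v + 1)%R == w) * right_deg t v)%N.
  rewrite -rk_left -rk_right -count_if_eq.
  by apply: eq_in_count => x x_S; rewrite /fire x_S.
have c_S : count (fun x => c x == w) S = ((v == w) * deg t v)%N.
  rewrite /deg -size_S -count_predT.
  rewrite (@eq_in_count _ _ (fun=> v == w)); last first.
    by move=> x /S_at_v /andP[_ /eqP ->].
  by case: (v == w); rewrite ?mul1n ?mul0n ?count_predT ?count_pred0.
have fire_notS : count (fun x => fire t c v S x == w) [seq x <- L | x \notin S]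
    = count (fun x => c x == w) [seq x <- L | x \notin S].
  by apply: eq_in_count => x; rewrite mem_filter /fire => /andP[/negbTE ->].
rewrite /nchips !(count_split_subset _ uS uL sSL) fire_S c_S fire_notS.
by rewrite laplacian_delta /deg !PoszD !PoszM; ring.
Qed.

Lemma nchips_run c ms c' : is_run t L c ms c' -> forall w,
  (nchips c' w)%:Z = (nchips c w)%:Z - laplacian t (fun x => (nfirings ms x)%:Z) w.
Proof.
elim=> {c ms c'} [c|c v S ms c' legal _ IH] w.
  by rewrite /laplacian /nfirings /=; ring.
by rewrite IH nchips_fire // /laplacian /delta /nfirings /= !PoszD; ring.
Qed.

Lemma legal_move_deg c v S : legal_move t L c v S -> (deg t v <= nchips c v)%N.
Proof.
rewrite /deg; case/and3P=> uS /allP S_at_v /eqP <-; rewrite /nchips -size_filter.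
by apply: uniq_leq_size => // x /S_at_v /andP[x_L c_x]; rewrite mem_filter x_L c_x.
Qed.

Lemma stable_nchips c : stable t L c -> forall v, (nchips c v < deg t v)%N.
Proof.
move=> c_stable v; rewrite ltnNge; apply/negP => deg_le; apply: c_stable.
exists v, (take (deg t v) [seq x <- L | c x == v]); apply/and3P; split.
- by rewrite take_uniq ?filter_uniq.
- by apply/allP => x /mem_take; rewrite mem_filter => /andP[-> ->].
- by rewrite size_takel // size_filter.
Qed.

Lemma nfirings_le c ms c' (u : int -> int) : is_run t L c ms c' ->
  (forall w, 0 <= u w) ->
  (forall w, (nchips c w)%:Z - laplacian t u w < (deg t w)%:Z) ->
  forall w, (nfirings ms w)%:Z <= u w.
Proof.
move=> run; elim: run u => {c ms c'} [c|c v S ms c' legal _ IH] u u_ge0 u_stab w.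
  exact: u_ge0.
have u_v_gt0 : 0 < u v.
  rewrite lt0r u_ge0 andbT; apply/eqP => u_v0.
  have := u_stab v; rewrite /laplacian u_v0.
  have := legal_move_deg legal; have := u_ge0 (v - 1); have := u_ge0 (v + 1).
  nia.
pose u' x := u x - delta v x.
have u'_ge0 x : 0 <= u' x.
  by rewrite /u' /delta; case: eqP => [<-|_] /=; have := u_ge0 x; lia.
have u'_stab x : (nchips (fire t c v S) x)%:Z - laplacian t u' x < (deg t x)%:Z.
  have -> : laplacian t u' x = laplacian t u x - laplacian t (delta v) x.
    by rewrite /laplacian /u'; ring.
  by rewrite nchips_fire //; have := u_stab x; lia.
have := IH u' u'_ge0 u'_stab w; rewrite /nfirings /u' /delta /= PoszD; lia.
Qed.
End Firing.

Definition weight (t n : nat) : int := if (n <= t)%N then (2 ^ (t - n))%N%:Z else 1.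

Lemma weight_gt0 t n : 0 < weight t n.
Proof. by rewrite /weight; case: ifP; rewrite // ltz_nat expn_gt0. Qed.

Lemma weightS t n : (n < t)%N -> weight t n = 2 * weight t n.+1.
Proof.
move=> lt_nt; rewrite /weight ltnW // lt_nt -PoszM -expnS.
by congr (Posz (2 ^ _)); lia.
Qed.

Lemma weight_ge t n : (t <= n)%N -> weight t n = 1.
Proof.
by move=> le_tn; rewrite /weight; case: leqP => // _; rewrite (eqP le_tn).
Qed.

Lemma nedges_pos t n : (nedges t n%:Z)%:Z = weight t n.
Proof.
rewrite /nedges /weight; case: leqP => le_nt; first by rewrite ifT //; lia.
by rewrite !ifF //; lia.
Qed.

Lemma nedges_neg t n : (nedges t (- n.+1%:Z))%:Z = weight t n.
Proof.
rewrite /nedges /weight /=.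
by case: leqP => le_nt; [rewrite ifT ?subSS | rewrite ifF]; lia.
Qed.

Lemma deg_pos t m : (deg t m.+1%:Z)%:Z = weight t m + weight t m.+1.
Proof.
rewrite /deg /left_deg /right_deg PoszD -nedges_pos -nedges_pos.
by have -> : m.+1%:Z - 1 = m%:Z by lia.
Qed.

Lemma deg_neg t m : (deg t (- m.+1%:Z))%:Z = weight t m + weight t m.+1.
Proof.
rewrite /deg /left_deg /right_deg PoszD -nedges_neg -nedges_neg addrC.
by have -> : - m.+1%:Z - 1 = - m.+2%:Z by lia.
Qed.

Lemma deg0 t : (deg t 0%:Z)%:Z = 2 * weight t 0.
Proof.
rewrite /deg /left_deg /right_deg PoszD.
by rewrite (_ : 0%:Z - 1 = - 1%:Z) // (nedges_neg t 0); lia.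
Qed.

(* [ray_laplacian t g m] is the Laplacian at distance m + 1 from the origin
   on either half-line, [g k] being the value at distance k. *)
Definition ray_laplacian (t : nat) (g : nat -> int) (m : nat) : int :=
  g m.+1 * (weight t m + weight t m.+1) - g m * weight t m - g m.+2 * weight t m.+1.

Lemma laplacian_pos t f m :
  laplacian t f m.+1%:Z = ray_laplacian t (fun k => f k%:Z) m.
Proof.
rewrite /laplacian /ray_laplacian deg_pos /right_deg /left_deg addrK.
have -> : m.+1%:Z - 1 = m%:Z by lia.
have -> : m.+1%:Z + 1 = m.+2%:Z by lia.
by rewrite !nedges_pos.
Qed.

Lemma laplacian_neg t f m :
  laplacian t f (- m.+1%:Z) = ray_laplacian t (fun k => f (- k%:Z)) m.
Proof.
rewrite /laplacian /ray_laplacian deg_neg /right_deg /left_deg addrK.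
have -> : - m.+1%:Z - 1 = - m.+2%:Z by lia.
have -> : - m.+1%:Z + 1 = - m%:Z by lia.
by rewrite !nedges_neg; ring.
Qed.

Lemma laplacian0 t f :
  laplacian t f 0%:Z = weight t 0 * (2 * f 0%:Z - f 1%:Z - f (- 1%:Z)).
Proof.
rewrite /laplacian deg0 /right_deg /left_deg addrK.
have -> : 0%:Z - 1 = - 1%:Z by [].
have -> : 0%:Z + 1 = 1%:Z by [].
by rewrite (nedges_neg t 0); ring.
Qed.

Definition slope (g : nat -> int) (k : nat) : int := g k - g k.+1.

Section Ray.
Variables (t : nat) (g : nat -> int).
Hypothesis g_stable : forall m, (m <= t)%N ->
  0 <= - ray_laplacian t g m < weight t m + weight t m.+1.
Hypothesis g_end : g t.+2 = 0.
Hypothesis g_top : g t.+1 <= 1.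

Lemma slope_step m : (m < t)%N -> 0 <= 2 * slope g m - slope g m.+1 <= 2.
Proof.
move=> lt_mt; have := g_stable (ltnW lt_mt).
rewrite /ray_laplacian /slope (weightS lt_mt); have := weight_gt0 t m.+1; nia.
Qed.

Lemma slope_last : 0 <= slope g t - slope g t.+1 <= 1.
Proof.
have := g_stable (leqnn t).
by rewrite /ray_laplacian /slope !weight_ge //; lia.
Qed.

Lemma slope_le2 k : (k <= t)%N -> slope g k <= 2.
Proof.
move=> le_kt; rewrite -(subKn le_kt).
elim: (t - k)%N (leq_subr k t) => [|j IHj] le_jt.
  by have := slope_last; rewrite subn0 /slope g_end; lia.
have lt_jt : (t - j.+1 < t)%N by lia.
have := slope_step lt_jt; have := IHj (ltnW le_jt).
by rewrite (_ : (t - j.+1).+1 = t - j)%N; lia.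
Qed.

Lemma slope_eq2 : 2 <= slope g 0 -> forall k, (k <= t)%N -> slope g k = 2.
Proof.
move=> ge2_0; suff ge2 k : (k <= t)%N -> 2 <= slope g k.
  by move=> k le_kt; have := slope_le2 le_kt; have := ge2 k le_kt; lia.
elim: k => // k IHk lt_kt.
by have := slope_step lt_kt; have := IHk (ltnW lt_kt); lia.
Qed.

Lemma slope0_ge2E : 2 <= slope g 0 <-> 2 * t%:Z + 3 <= g 0.
Proof.
have drop_le k : (k <= t)%N -> g 0 - g k.+1 <= slope g 0 + 2 * k%:Z.
  elim: k => [|k IHk] le_kt; first by rewrite /slope; lia.
  by have := slope_le2 le_kt; have := IHk (ltnW le_kt); rewrite /slope; lia.
split=> [ge2_0|g0_ge]; last by have := drop_le t (leqnn t); lia.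
have drop_eq k : (k <= t)%N -> g 0 - g k.+1 = 2 * k.+1%:Z.
  elim: k => [|k IHk] le_kt.
    by have := slope_eq2 ge2_0 (leq0n t); rewrite /slope; lia.
  by have := slope_eq2 ge2_0 le_kt; have := IHk (ltnW le_kt); rewrite /slope; lia.
have := slope_last; have := drop_eq t (leqnn t).
by rewrite (slope_eq2 ge2_0 (leqnn t)) /slope g_end; lia.
Qed.

End Ray.

(* The firing vector of every complete run, as it turns out. *)
Definition ray_odometer (t k : nat) : int :=
  if (k <= t.+1)%N then 2 * (t.+1 - k)%N%:Z + 1 else 0.

Definition odometer (t : nat) (w : int) : int := ray_odometer t `|w|.

Lemma odometer_ge0 t w : 0 <= odometer t w.
Proof. by rewrite /odometer /ray_odometer; case: ifP. Qed.

Lemma odometer_out t w : (t.+1 < `|w|)%N -> odometer t w = 0.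
Proof. by rewrite /odometer /ray_odometer ltnNge => /negbTE ->. Qed.

Lemma odometer_edge t w : `|w|%N = t.+1 -> odometer t w = 1.
Proof. by rewrite /odometer /ray_odometer => ->; rewrite leqnn subnn. Qed.

Lemma ray_odometer_stable t m :
  - ray_laplacian t (ray_odometer t) m < weight t m + weight t m.+1.
Proof.
rewrite /ray_laplacian /ray_odometer; case: (ltnP m t) => [lt_mt|le_tm].
  rewrite (weightS lt_mt) !ifT; try lia.
  by have := weight_gt0 t m.+1; nia.
by rewrite !weight_ge; try lia; case: ifP; case: ifP; case: ifP; lia.
Qed.

Lemma odometer_stable t w :
  (w == 0)%:Z * (4 * weight t 0) - laplacian t (odometer t) w < (deg t w)%:Z.
Proof.
case: w => [[|m]|m].
- rewrite laplacian0 deg0 /odometer /ray_odometer /=.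
  by have := weight_gt0 t 0; nia.
- by rewrite laplacian_pos deg_pos mul0r sub0r; apply: ray_odometer_stable.
- rewrite NegzE laplacian_neg deg_neg mul0r sub0r /ray_laplacian /odometer !abszN.
  exact: ray_odometer_stable.
Qed.

Lemma stable_firing_slopes t (f : int -> int) :
  (forall w, 0 <= (w == 0)%:Z * (4 * weight t 0) - laplacian t f w
               < (deg t w)%:Z) ->
  (forall w, 0 <= f w <= odometer t w) ->
  forall k, (k <= t)%N -> f k%:Z = f k.+1%:Z + 2 /\ f (- k%:Z) = f (- k.+1%:Z) + 2.
Proof.
move=> f_stable f_bound.
pose gR k := f k%:Z; pose gL k := f (- k%:Z).
have gR_stable m : (m <= t)%N ->
    0 <= - ray_laplacian t gR m < weight t m + weight t m.+1.
  move=> _; have := f_stable m.+1%:Z.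
  by rewrite laplacian_pos deg_pos mul0r sub0r.
have gL_stable m : (m <= t)%N ->
    0 <= - ray_laplacian t gL m < weight t m + weight t m.+1.
  move=> _; have := f_stable (- m.+1%:Z).
  by rewrite laplacian_neg deg_neg mul0r sub0r.
have gR_end : gR t.+2 = 0.
  by have := f_bound t.+2%:Z; rewrite odometer_out /gR //; lia.
have gL_end : gL t.+2 = 0.
  by have := f_bound (- t.+2%:Z); rewrite odometer_out ?abszN /gL //; lia.
have gR_top : gR t.+1 <= 1.
  by have := f_bound t.+1%:Z; rewrite odometer_edge /gR //; lia.
have gL_top : gL t.+1 <= 1.
  by have := f_bound (- t.+1%:Z); rewrite odometer_edge ?abszN /gL //; lia.
have gL0 : gL 0%N = gR 0%N by rewrite /gL oppr0.
have site0 : 3 <= slope gR 0 + slope gL 0.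
  have := f_stable 0%:Z; rewrite laplacian0 deg0 /slope gL0 /gR /gL.
  by have := weight_gt0 t 0; nia.
have := slope_le2 gR_stable gR_end gR_top (leq0n t).
have := slope_le2 gL_stable gL_end gL_top (leq0n t).
have := slope0_ge2E gR_stable gR_end gR_top.
have := slope0_ge2E gL_stable gL_end gL_top.
rewrite gL0 => iffL iffR le2L le2R.
have [ge2R ge2L] : 2 <= slope gR 0 /\ 2 <= slope gL 0 by lia.
move=> k le_kt; have := slope_eq2 gR_stable gR_end gR_top ge2R le_kt.
have := slope_eq2 gL_stable gL_end gL_top ge2L le_kt.
by rewrite /slope /gR /gL; lia.
Qed.

Theorem lemma3p4 (t : nat) (L : seq nat) (ms : seq (int * seq nat))
  (cf : config) :
  uniq L -> size L = (2 ^ (t + 2))%N ->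
  is_run t L all_at_zero ms cf -> stable t L cf ->
  (forall k : int, 0 <= k <= t%:Z ->
     nfirings ms k = (nfirings ms (k + 1) + 2)%N) /\
  (forall k : int, - t%:Z <= k <= 0 ->
     nfirings ms k = (nfirings ms (k - 1) + 2)%N).
Proof.
move=> uL size_L run cf_stable.
have init w : (nchips L all_at_zero w)%:Z = (w == 0)%:Z * (4 * weight t 0).
  have -> : 4 * weight t 0 = (size L)%:Z.
    by rewrite size_L /weight subn0 expnD PoszM mulrC.
  rewrite /nchips /all_at_zero eq_sym.
  by case: (w == 0); rewrite ?mul1r ?mul0r ?count_predT ?count_pred0.
have final w : (nchips L cf w)%:Z
    = (w == 0)%:Z * (4 * weight t 0) - laplacian t (fun x => (nfirings ms x)%:Z) w.
  by rewrite (nchips_run uL run) init.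
have f_stable w : 0 <= (w == 0)%:Z * (4 * weight t 0)
    - laplacian t (fun x => (nfirings ms x)%:Z) w < (deg t w)%:Z.
  by rewrite -final ltz_nat stable_nchips.
have f_bound w : 0 <= (nfirings ms w)%:Z <= odometer t w.
  apply: (nfirings_le uL run (odometer_ge0 t)) => x.
  by rewrite init; apply: odometer_stable.
have profile := stable_firing_slopes f_stable f_bound.
split=> k /andP[k_ge0 k_le_t].
- have [n -> le_nt] : exists2 n : nat, k = n%:Z & (n <= t)%N.
    by exists `|k|%N; lia.
  by have [+ _] := profile n le_nt; rewrite (_ : n%:Z + 1 = n.+1%:Z); lia.
- have [n -> le_nt] : exists2 n : nat, k = - n%:Z & (n <= t)%N.
    by exists `|k|%N; lia.
  by have [_ +] := profile n le_nt; rewrite (_ : - n%:Z - 1 = - n.+1%:Z); lia.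
Qed.
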